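(* For $m\geq1$ let $T_m$ denote the number of integer sequences $(d_1,\ldots,d_m)$ such that $d_j\in\{1,-3,-4,-5,\ldots\}$ for all $1\leq j\leq m$, $\sum_{j=1}^k d_j\geq 1$ for all $1\leq k\leq m$, and $\sum_{j=1}^m d_j=1$. Then $T_{2M}=o(5^M)$ as $M\to\infty$. *)

From HB Require Import structures.
From mathcomp Require Import all_boot all_order all_algebra.
Set Implicit Arguments. Unset Strict Implicit. Unset Printing Implicit Defensive.
Import Order.TTheory GRing.Theory Num.Theory.
Local Open Scope ring_scope.

Definition allowed_step (d : int) : bool := (d == 1) || (d <= -3).

Definition admissible (s : seq int) : bool :=
  [&& all allowed_step s,
      all (fun k : nat => 1 <= \sum_(d <- take k s) d) (iota 1 (size s))
    & \sum_(d <- s) d == 1].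

(* Candidate box: every admissible sequence of length m has entries in
   [-m, 1] (the partial sum before step j is <= j-1 <= m-1 and after is >= 1).
   box_vals m = [1; 0; -1; ...; -m]. *)
Definition box_vals (m : nat) : seq int := [seq 1 - k%:Z | k <- iota 0 m.+2].

Fixpoint box_seqs (m n : nat) : seq (seq int) :=
  match n with
  | 0%N => [:: [::]]
  | n'.+1 => [seq x :: s | x <- box_vals m, s <- box_seqs m n']
  end.

Definition T (m : nat) : nat :=
  count (fun s => admissible s) (box_seqs m m).

(* Give an allowed step d the weight u^d for a parameter u > 1, and a
   forbidden one the weight 0.  An admissible sequence of length m has total
   weight u^1 >= 1, so T_m is at most G_m(u)^m, where G_m(u) is the sum of the
   weights of the candidate steps 1, 0, ..., -m.  The geometric series bounds
   G_m(u) by u + u^-3 / (1 - u^-1) uniformly in m; for u = 7/4 this is below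
   11/5, whence T_{2M} <= (121/25)^M = (121/125)^M 5^M, and (121/125)^M -> 0. *)

From HB Require Import structures.
From mathcomp Require Import all_boot all_order all_algebra.
From mathcomp Require Import ring lra zify.
Import Order.TTheory GRing.Theory Num.Theory.
Set Implicit Arguments. Unset Strict Implicit. Unset Printing Implicit Defensive.
Local Open Scope ring_scope.

Section Geometric.
Variables (R : numFieldType) (v : R).
Hypotheses (v_ge0 : 0 <= v) (v_lt1 : v < 1).

Let subv_gt0 : 0 < 1 - v. Proof. by rewrite subr_gt0. Qed.

Lemma geometric_sum_le n : \sum_(i < n) v ^+ i <= (1 - v)^-1.
Proof.
have geomE : (1 - v) * \sum_(i < n) v ^+ i = 1 - v ^+ n.
  by rewrite -opprB -[RHS]opprB subrX1 mulNr.
by rewrite -[leRHS]mulr1 ler_pdivlMl // geomE gerDl oppr_le0 exprn_ge0.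
Qed.

Lemma geometric_tail_le a n : \sum_(a <= k < n) v ^+ k <= v ^+ a / (1 - v).
Proof.
rewrite -[a]add0n big_addn.
under eq_bigr do rewrite exprD.
rewrite -mulr_suml big_mkord add0n mulrC ler_wpM2l ?exprn_ge0 //.
exact: geometric_sum_le.
Qed.

Lemma exprn_mulrn_le n : v ^+ n *+ n <= (1 - v)^-1.
Proof.
apply: le_trans (geometric_sum_le n).
rewrite -[n in _ *+ n]card_ord -sumr_const.
by apply: ler_sum => i _; apply: ler_wiXn2l => //; [exact: ltW | exact: ltnW].
Qed.

End Geometric.

Lemma exprn_lt1_eventually_le (R : archiNumFieldType) (r eps : R) :
  0 <= r -> r < 1 -> 0 < eps ->
  exists N, forall n, (N <= n)%N -> r ^+ n <= eps.
Proof.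
move=> r_ge0 r_lt1 eps_gt0.
have c_gt0 : 0 < eps * (1 - r) by rewrite mulr_gt0 // subr_gt0.
exists (Num.Def.archi_bound (eps * (1 - r))^-1) => n le_Nn.
have n_gt : (eps * (1 - r))^-1 < n%:R.
  apply: lt_le_trans (archi_boundP _) _; first by rewrite invr_ge0 ltW.
  by rewrite ler_nat.
have n_gt0 : 0 < n%:R :> R by apply: le_lt_trans n_gt; rewrite invr_ge0 ltW.
have := exprn_mulrn_le r_ge0 r_lt1 n.
rewrite -mulr_natr -ler_pdivlMr // => /le_trans; apply.
by rewrite ler_pdivrMr // mulrC -ler_pdivrMr // -invfM mulrC ltW.
Qed.

Lemma count_le_sum_weight (R : numDomainType) (I : Type) (P : pred I)
    (F : I -> R) (r : seq I) :
  (forall i, 0 <= F i) -> (forall i, P i -> 1 <= F i) ->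
  (count P r)%:R <= \sum_(i <- r) F i.
Proof.
move=> F_ge0 F_ge1; rewrite -sum1_count natr_sum big_mkcond /=.
by apply: ler_sum => i _; case: ifP => [/F_ge1|_].
Qed.

Lemma allowed_step_1B (k : nat) :
  allowed_step (1 - k%:Z) = (k == 0)%N || (3 < k)%N.
Proof. rewrite /allowed_step; lia. Qed.

Section StepWeights.
Variable R : numFieldType.

Definition step_weight (u : R) (d : int) : R := (allowed_step d)%:R * u ^ d.

Definition step_gf (m : nat) (u : R) : R := \sum_(d <- box_vals m) step_weight u d.

Lemma step_weight_ge0 u d : 0 <= u -> 0 <= step_weight u d.
Proof. by move=> u_ge0; rewrite mulr_ge0 ?exprz_ge0. Qed.

Lemma prod_step_weight u s : u != 0 ->
  \prod_(d <- s) step_weight u d = (all allowed_step s)%:R * u ^ (\sum_(d <- s) d).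
Proof.
move=> u_neq0; elim: s => [|d s IHs]; first by rewrite !big_nil mul1r.
by rewrite !big_cons IHs /= -mulnb natrM expfzDr // mulrACA.
Qed.

Lemma sum_box_seqs_prod_step_weight m n u :
  \sum_(s <- box_seqs m n) \prod_(d <- s) step_weight u d = step_gf m u ^+ n.
Proof.
elim: n => [|n IHn]; first by rewrite big_seq1 big_nil.
rewrite (big_allpairs_dep (h := fun d s => d :: s)) exprS -IHn mulr_suml.
apply: eq_bigr => d _; rewrite mulr_sumr.
by apply: eq_bigr => s _; rewrite big_cons.
Qed.

Lemma T_le_step_gf m u : 1 <= u -> (T m)%:R <= step_gf m u ^+ m.
Proof.
move=> u_ge1; have u_gt0 : 0 < u by apply: lt_le_trans u_ge1.
rewrite -sum_box_seqs_prod_step_weight; apply: count_le_sum_weight => s.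
  by apply: prodr_ge0 => d _; apply: step_weight_ge0 (ltW u_gt0).
case/and3P => all_s _ /eqP sum_s.
by rewrite prod_step_weight ?lt0r_neq0 // all_s sum_s mul1r expr1z.
Qed.

Lemma step_gfE m u : u != 0 ->
  step_gf m u = u * \sum_(0 <= k < m.+2 | allowed_step (1 - k%:Z)) u^-1 ^+ k.
Proof.
move=> u_neq0; rewrite /step_gf big_map mulr_sumr [RHS]big_mkcond.
apply: eq_bigr => k _; rewrite /step_weight; case: allowed_step; last by rewrite mul0r.
by rewrite mul1r expfzDr // expr1z -exprnN exprVn.
Qed.

Lemma step_gf_le m u : 1 < u -> step_gf m u <= u + u^-1 ^+ 3 / (1 - u^-1).
Proof.
move=> u_gt1; have u_gt0 : 0 < u by apply: lt_trans u_gt1.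
have v_ge0 : 0 <= u^-1 by rewrite invr_ge0 ltW.
have v_lt1 : u^-1 < 1 by rewrite invf_lt1.
have tailE : \sum_(1 <= k < m.+2 | allowed_step (1 - k%:Z)) u^-1 ^+ k
           = \sum_(4 <= k < m.+2) u^-1 ^+ k.
  rewrite (@big_nat_widenl _ _ _ 4 0) // (@big_nat_widenl _ _ _ 1 0) //.
  by apply: eq_bigl => k; rewrite allowed_step_1B; case: k => [|[|[|[|k]]]].
rewrite step_gfE ?gt_eqF // big_ltn_cond // tailE expr0 mulrDr mulr1 lerD2l.
by rewrite -ler_pdivlMl // mulrA -exprS geometric_tail_le.
Qed.

End StepWeights.

Lemma step_gf_7_4_le m : step_gf m (7%:R / 4%:R : rat) <= 11%:R / 5%:R.
Proof.
apply: le_trans (step_gf_le _ _) _; first lra.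
have -> : (7%:R / 4%:R : rat)^-1 ^+ 3 / (1 - (7%:R / 4%:R)^-1) = 64%:R / 147%:R.
  by rewrite invf_div; field.
lra.
Qed.

Theorem mainTheorem4 :
  forall eps : rat, 0 < eps ->
  exists M0 : nat, forall M : nat, (M0 <= M)%N ->
    (T (2 * M))%:R <= eps * 5%:R ^+ M.
Proof.
move=> eps eps_gt0.
have r_ge0 : 0 <= 121%:R / 125%:R :> rat by lra.
have r_lt1 : 121%:R / 125%:R < 1 :> rat by lra.
have [N powN_le] := exprn_lt1_eventually_le r_ge0 r_lt1 eps_gt0.
exists N => M /powN_le pow_le.
set G := step_gf (2 * M) (7%:R / 4%:R : rat).
have u_ge1 : 1 <= 7%:R / 4%:R :> rat by lra.
have G_ge0 : 0 <= G.
  by apply: sumr_ge0 => d _; apply: step_weight_ge0; apply: le_trans u_ge1.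
have G2_le : G ^+ 2 <= 121%:R / 25%:R.
  have G_le := step_gf_7_4_le (2 * M).
  rewrite expr2; apply: le_trans (ler_pM G_ge0 G_ge0 G_le G_le) _; lra.
apply: le_trans (T_le_step_gf _ u_ge1) _.
rewrite -/G exprM.
apply: le_trans (_ : (121%:R / 25%:R) ^+ M <= _).
  apply: lerXn2r G2_le; rewrite nnegrE; [exact: exprn_ge0 | lra].
have -> : 121%:R / 25%:R = 121%:R / 125%:R * 5%:R :> rat by lra.
rewrite exprMn; apply: ler_wpM2r pow_le; apply: exprn_ge0; lra.
Qed.
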